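(* Let $n_w\ge 1$, $i\ge 0$ and $w\ge 1$ be integers, and let $c_1,\dots,c_{n_w}$ be distinct symbols (clusters). Let $G$ be the directed graph (the pruned configuration graph) whose nodes are the pairs $(idx, C)$ with $1\le idx\le n_w+1$, $C\subseteq\{c_x \mid \max(1,idx-2i-2w+1)\le x<idx\}$ and $|C|\le i+w$, and whose edges are: left edges $(idx,C)\to(idx+1,C)$ for $idx\le n_w$; right edges $(idx,C)\to(idx+1,C\cup\{c_{idx}\})$ for $idx\le n_w$ whenever the target is a node; and horizontal edges $(idx,C)\to(idx,C\setminus\{c\})$ for $c\in C$. Then $G$ has at most $(n_w+1)2^{2i+2w-1}$ nodes and at most $(i+w+1)(n_w+1)2^{2i+2w-1}$ edges.
   Context: This graph represents the states $(idx, C_{buf})$ of a search for an ordering of clusters: $idx$ is the index of the next cluster to be processed and $C$ is the set of buffered (not yet placed) clusters; left edges place $c_{idx}$, right edges buffer $c_{idx}$, horizontal edges place a buffered cluster. *)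

From mathcomp Require Import all_boot.
Set Implicit Arguments. Unset Strict Implicit. Unset Printing Implicit Defensive.

(* Cluster c_x (1 <= x <= nw) is represented by the ordinal x : 'I_(nw.+2);
   an index idx (1 <= idx <= nw+1) is also an ordinal of 'I_(nw.+2). *)
Definition cfg_state (nw : nat) : finType := ('I_nw.+2 * {set 'I_nw.+2})%type.

(* The window {c_x | max(1, idx-2i-2w+1) <= x < idx}. Note
   max(1, idx-2i-2w+1) = maxn 1 ((idx+1) - (2i+2w)) with truncated subtraction. *)
Definition window (nw i w : nat) (idx : 'I_nw.+2) : {set 'I_nw.+2} :=
  [set x : 'I_nw.+2 | (maxn 1 ((idx + 1) - (2 * i + 2 * w)) <= x) && (x < idx)].

Definition is_node (nw i w : nat) (v : cfg_state nw) : bool :=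
  [&& 1 <= v.1, v.1 <= nw.+1, v.2 \subset window i w v.1 & #|v.2| <= i + w].

Definition is_edge (nw i w : nat) (u v : cfg_state nw) : bool :=
  [&& is_node i w u, is_node i w v &
   [||
       [&& u.1 <= nw, val v.1 == (val u.1).+1 & v.2 == u.2],
       [&& u.1 <= nw, val v.1 == (val u.1).+1 & v.2 == u.2 :|: [set u.1]]
     |
       (v.1 == u.1) && [exists c in u.2, v.2 == u.2 :\ c]]].

(** A node (idx, C) has 1 <= idx and C inside a window of at most
    2i+2w-1 clusters, so each of the nw+1 admissible indices carries at most
    2^(2i+2w-1) nodes. Out of a node (idx, C) there is at most one left edge,
    at most one right edge, and one horizontal edge per element of C; since
    c_idx is not in the window, the right edge exists only when |C| < i+w.
    Hence every node has out-degree at most i+w+1, and the edge bound follows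
    from the node bound. *)

From mathcomp Require Import all_boot zify.

Section RelationCounting.

Variables T U : finType.
Implicit Type r : T -> U -> bool.

Lemma card_rel r : #|[set e : T * U | r e.1 e.2]| = \sum_(t : T) #|[set u | r t u]|.
Proof.
rewrite -sum1_card (eq_bigr (fun t => \sum_(u | r t u) 1)); last first.
  by move=> t _; rewrite -sum1_card; apply: eq_bigl => u; rewrite inE.
by rewrite pair_big_dep /=; apply: eq_bigl => -[t u]; rewrite !inE.
Qed.

Lemma card_rel_le r (P : pred T) d :
  (forall t u, r t u -> P t) -> (forall t, P t -> #|[set u | r t u]| <= d) ->
  #|[set e : T * U | r e.1 e.2]| <= d * #|[set t | P t]|.
Proof.
move=> rP degP; rewrite card_rel (bigID P) /= addnC big1 ?add0n => [|t nPt]; last first.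
  apply/eqP; rewrite cards_eq0 -subset0; apply/subsetP => u.
  by rewrite inE => /rP; rewrite (negbTE nPt).
rewrite mulnC cardsE -sum_nat_const; exact: leq_sum.
Qed.

End RelationCounting.

Lemma card_ord_range n lo hi : #|[set x : 'I_n | lo <= x < hi]| <= hi - lo.
Proof.
rewrite cardE -(size_map val) -[hi - lo](size_iota lo).
apply: uniq_leq_size => [|y /mapP[x]].
  by rewrite map_inj_uniq ?enum_uniq //; exact: val_inj.
rewrite mem_enum inE => /andP[lo_x x_hi] ->{y}.
by rewrite mem_iota lo_x subnKC // (leq_trans lo_x (ltnW x_hi)).
Qed.

Lemma card_fst_pinned_le n (V : finType) k (S : {set V}) :
  #|[set v : 'I_n * V | (val v.1 == k) && (v.2 \in S)]| <= #|S|.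
Proof.
rewrite -(@card_in_imset _ _ snd) => [|[x1 y1] [x2 y2]]; last first.
  rewrite !inE /= => /andP[/eqP e1 _] /andP[/eqP e2 _] /= ->.
  by congr pair; apply: val_inj; exact: etrans e1 (esym e2).
by apply: subset_leq_card; apply/subsetP => y /imsetP[v]; rewrite inE => /andP[_ vS] ->.
Qed.

Section ConfigurationGraph.

Variables nw i w : nat.
Hypothesis w_gt0 : 1 <= w.

Lemma card_window_le (idx : 'I_nw.+2) : #|window i w idx| <= 2 * i + 2 * w - 1.
Proof. by apply: leq_trans (card_ord_range _ _ _) _; lia. Qed.

Lemma notin_window (idx : 'I_nw.+2) : idx \notin window i w idx.
Proof. by rewrite inE ltnn andbF. Qed.

Lemma card_node_fiber_le (idx : 'I_nw.+2) :
  #|[set C | is_node i w (idx, C)]| <= 2 ^ (2 * i + 2 * w - 1).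
Proof.
apply: leq_trans (_ : #|powerset (window i w idx)| <= _).
  by apply: subset_leq_card; apply/subsetP => C; rewrite !inE => /and4P[].
by rewrite card_powerset leq_pexp2l // card_window_le.
Qed.

Lemma card_nodes_le :
  #|[set v : cfg_state nw | is_node i w v]| <= nw.+1 * 2 ^ (2 * i + 2 * w - 1).
Proof.
have -> : #|[set v : cfg_state nw | is_node i w v]| =
          \sum_(idx : 'I_nw.+2) #|[set C | is_node i w (idx, C)]|.
  by rewrite -card_rel; apply: eq_card => -[].
rewrite big_ord_recl.
have -> : #|[set C | is_node i w (ord0 : 'I_nw.+2, C)]| = 0.
  by apply/eqP; rewrite cards_eq0 -subset0; apply/subsetP => C; rewrite inE.
rewrite add0n -[X in X * _]card_ord -sum_nat_const; apply: leq_sum => idx _.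
exact: card_node_fiber_le.
Qed.

Lemma card_successors_le (u : cfg_state nw) :
  is_node i w u -> #|[set v | is_edge i w u v]| <= i + w + 1.
Proof.
case: u => a C /and4P[_ _ /= C_win C_cap].
set S := [set D in [set C; C :|: [set a]] | #|D| <= i + w].
have succ_sub : [set v | is_edge i w (a, C) v] \subset
    [set v : cfg_state nw | (val v.1 == a.+1) && (v.2 \in S)] :|: [set (a, C :\ c) | c in C].
  apply/subsetP => -[b D]; rewrite !inE /is_edge /= => /and3P[_ /and4P[_ _ _ /= D_cap]].
  case/or3P => [/and3P[_ -> /eqP->] | /and3P[_ -> /eqP D_def] |].
  - by rewrite eqxx C_cap.
  - by rewrite D_cap D_def eqxx orbT.
  - case/andP=> /eqP-> /existsP[c /andP[cC /eqP->]]; apply/orP; right.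
    by apply/imsetP; exists c.
have cardS : #|S| + #|C| <= i + w + 1.
  have aC : a \notin C by apply: contra (subsetP C_win a) (notin_window a).
  case: (ltnP #|C| (i + w)) => [C_small | C_full].
    suff : #|S| <= 2 by lia.
    rewrite /S setIdE; apply: leq_trans (subset_leq_card (subsetIl _ _)) _.
    by rewrite cards2 ltnS leq_b1.
  suff /subset_leq_card : S \subset [set C] by rewrite cards1 addnC; exact: leq_add.
  apply/subsetP => D; rewrite !inE => /andP[/orP[//|/eqP->]].
  by rewrite setUC cardsU1 aC; lia.
apply: leq_trans (subset_leq_card succ_sub) _; rewrite cardsU.
apply: leq_trans (leq_subr _ _) (leq_trans _ cardS).
by apply: leq_add; [exact: card_fst_pinned_le | exact: leq_imset_card].
Qed.

End ConfigurationGraph.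

Theorem lemma3 (nw i w : nat) (hnw : 1 <= nw) (hw : 1 <= w) :
  #|[set v : cfg_state nw | is_node i w v]| <= nw.+1 * 2 ^ (2 * i + 2 * w - 1)
  /\
  #|[set e : cfg_state nw * cfg_state nw | is_edge i w e.1 e.2]|
    <= (i + w + 1) * nw.+1 * 2 ^ (2 * i + 2 * w - 1).
Proof.
have nodes := card_nodes_le nw i w hw.
split=> //; rewrite -mulnA; apply: leq_trans (leq_mul (leqnn _) nodes).
apply: card_rel_le => [u v /and3P[] // | u]; exact: card_successors_le.
Qed.
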